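(* Let $I\subseteq\mathbb{R}$ be an open interval (possibly unbounded) and $\Sigma=I\times\mathbb{R}$. (i) If $F\in C^1(\Sigma,\mathbb{R}^2)$ is a non-singular map of the form $F(x,y)=\big(p_0(x),\,q_1(x)y+q_0(x)\big)$ with $p_0,q_0,q_1\in C^1(I,\mathbb{R})$, then $F$ is injective (hence invertible onto its image), and $q_1(x)\neq0$ for all $x\in I$. (ii) If $F(x,y)=\big(p_1(x)y+p_0(x),\,Q(x,y)\big)\in C^1(\Sigma,\mathbb{R}^2)$ is non-singular and $p_1(x)\neq0$ for all $x\in I$, then $F$ is injective. (iii) If $F(x,y)=\big(p_1(x)y+p_0(x),\,Q(x,y)\big)\in C^2(\Sigma,\mathbb{R}^2)$ is non-singular, then $p_1$ has no simple zeroes, i.e. there is no $x_0\in I$ with $p_1(x_0)=0\neq p_1'(x_0)$.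
   Context: For $F=(P,Q)$, $d_F=P_xQ_y-P_yQ_x$ is the Jacobian determinant; $F$ is non-singular if $d_F(x,y)\neq0$ for all $(x,y)\in\Sigma$. *)

From Stdlib Require Import Reals.
From Coquelicot Require Import Coquelicot.
Open Scope R_scope.

Definition in_interval (a b : Rbar) (x : R) : Prop := Rbar_lt a x /\ Rbar_lt x b.

Definition in_Sigma (a b : Rbar) (x y : R) : Prop := in_interval a b x.

Definition pdx (f : R -> R -> R) : R -> R -> R := fun x y => Derive (fun t => f t y) x.
Definition pdy (f : R -> R -> R) : R -> R -> R := fun x y => Derive (fun t => f x t) y.

Definition C1_Sigma (a b : Rbar) (f : R -> R -> R) : Prop :=
  forall x y, in_Sigma a b x y ->
    ex_derive (fun t => f t y) x /\ ex_derive (fun t => f x t) y /\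
    continuity_2d_pt f x y /\
    continuity_2d_pt (pdx f) x y /\ continuity_2d_pt (pdy f) x y.

Definition C2_Sigma (a b : Rbar) (f : R -> R -> R) : Prop :=
  C1_Sigma a b f /\ C1_Sigma a b (pdx f) /\ C1_Sigma a b (pdy f).

Definition C1_I (a b : Rbar) (g : R -> R) : Prop :=
  forall x, in_interval a b x -> ex_derive g x /\ continuity_pt (Derive g) x.

Definition jac (P Q : R -> R -> R) (x y : R) : R :=
  pdx P x y * pdy Q x y - pdy P x y * pdx Q x y.

Definition nonsingular (a b : Rbar) (P Q : R -> R -> R) : Prop :=
  forall x y, in_Sigma a b x y -> jac P Q x y <> 0.

Definition injective_Sigma (a b : Rbar) (P Q : R -> R -> R) : Prop :=
  forall x1 y1 x2 y2, in_Sigma a b x1 y1 -> in_Sigma a b x2 y2 ->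
    P x1 y1 = P x2 y2 -> Q x1 y1 = Q x2 y2 -> x1 = x2 /\ y1 = y2.

From Stdlib Require Import Reals Lra.
From Coquelicot Require Import Coquelicot.
Open Scope R_scope.

(* The Jacobian of F = (p0(x), q1(x) y + q0(x)) is p0' q1, so p0 is strictly monotone and
   q1 never vanishes, and F is injective on each vertical line.
   For F = (p1(x) y + p0(x), Q), parametrise the level line P = u by y = (u - p0 x) / p1 x; the
   second component restricted to it has derivative -d_F / p1, which never vanishes, so Q is
   injective along every level line of P.
   Where p1 vanishes, d_F = (p1' y + p0') Q_y, which is zero at y = -p0'/p1' if p1' <> 0. *)

Lemma is_derive_linear_approx (f : R -> R) (y l : R) : is_derive f y l ->
  forall eps : posreal, exists delta : posreal, forall v,
    Rabs (v - y) < delta -> Rabs (f v - f y - l * (v - y)) <= eps * Rabs (v - y).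
Proof.
intros [_ Hf] eps.
destruct (Hf y (fun P HP => HP) eps) as [delta Hdelta].
exists delta. intros v Hv.
specialize (Hdelta v Hv). revert Hdelta.
unfold norm, minus, plus, opp, scal; simpl. unfold abs, mult, plus, opp; simpl.
now rewrite (Rmult_comm l).
Qed.

Lemma differentiable_pt_lim_of_partials (f : R -> R -> R) (x y : R) :
  locally_2d (fun u v => ex_derive (fun t => f t v) u) x y ->
  continuity_2d_pt (pdx f) x y -> ex_derive (fun t => f x t) y ->
  differentiable_pt_lim f x y (pdx f x y) (pdy f x y).
Proof.
intros [d1 Hdx] Hcont Hdy eps.
assert (Heps2 : 0 < eps / 2) by (destruct eps; simpl; lra).
set (eps2 := mkposreal _ Heps2).
destruct (Hcont eps2) as [d2 Hd2].
assert (Hfy : is_derive (fun t => f x t) y (pdy f x y)) by now apply Derive_correct.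
destruct (is_derive_linear_approx _ _ _ Hfy eps2) as [d3 Hd3].
assert (Hd : 0 < Rmin d1 (Rmin d2 d3)) by (destruct d1, d2, d3; repeat apply Rmin_pos; auto).
exists (mkposreal _ Hd); simpl. intros u v Hu Hv.
pose proof (Rmin_l d1 (Rmin d2 d3)). pose proof (Rmin_r d1 (Rmin d2 d3)).
pose proof (Rmin_l d2 d3). pose proof (Rmin_r d2 d3).
destruct (MVT_cor4 (fun t => f t v) (fun t => pdx f t v) x (Rabs (u - x)))
  with (b := u) as [c [Hmvt Hc]]; [|lra|].
{ intros c Hc. apply Derive_correct, Hdx; lra. }
assert (Hx := Hd2 c v ltac:(lra) ltac:(lra)).
assert (Hy := Hd3 v ltac:(lra)).
(* split the increment at [(x, v)]: mean value theorem and continuity of [pdx f] horizontally,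
   differentiability of [f x] vertically *)
replace (f u v - f x y - (pdx f x y * (u - x) + pdy f x y * (v - y)))
  with ((pdx f c v - pdx f x y) * (u - x) + (f x v - f x y - pdy f x y * (v - y)))
  by (simpl in Hmvt; lra).
pose proof (Rmax_l (Rabs (u - x)) (Rabs (v - y))).
pose proof (Rmax_r (Rabs (u - x)) (Rabs (v - y))).
assert (Hhoriz : Rabs (pdx f c v - pdx f x y) * Rabs (u - x) <= eps2 * Rabs (u - x))
  by (apply Rmult_le_compat_r; [apply Rabs_pos | lra]).
eapply Rle_trans; [apply Rabs_triang|]. rewrite Rabs_mult.
pose proof (cond_pos eps). simpl in *. nra.
Qed.

Lemma in_interval_locally (a b : Rbar) (x : R) :
  in_interval a b x -> locally x (in_interval a b).
Proof. apply (open_and _ _ (open_Rbar_gt a) (open_Rbar_lt b)). Qed.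

Lemma in_interval_between (a b : Rbar) (x1 x2 c : R) :
  in_interval a b x1 -> in_interval a b x2 ->
  Rmin x1 x2 <= c <= Rmax x1 x2 -> in_interval a b c.
Proof.
unfold in_interval, Rmin, Rmax. destruct Rle_dec;
  intros [Ha1 Hb1] [Ha2 Hb2] [Hc1 Hc2]; split;
  [destruct a | destruct b | destruct a | destruct b]; simpl in *; auto; lra.
Qed.

Lemma C1_Sigma_differentiable (a b : Rbar) (f : R -> R -> R) (x y : R) :
  C1_Sigma a b f -> in_interval a b x ->
  differentiable_pt_lim f x y (pdx f x y) (pdy f x y).
Proof.
intros Hf Hx.
destruct (in_interval_locally a b x Hx) as [d Hd].
apply differentiable_pt_lim_of_partials; try apply (Hf x y Hx).
exists d. intros u v Hu _. apply (Hf u v), Hd, Hu.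
Qed.

Lemma injective_on_interval_of_Derive_neq0 (a b : Rbar) (g : R -> R) :
  (forall x, in_interval a b x -> ex_derive g x /\ Derive g x <> 0) ->
  forall x1 x2, in_interval a b x1 -> in_interval a b x2 -> g x1 = g x2 -> x1 = x2.
Proof.
intros Hg x1 x2 H1 H2 E.
assert (Hbetween : forall c, Rmin x1 x2 <= c <= Rmax x1 x2 -> in_interval a b c)
  by (intros c; now apply in_interval_between).
destruct (MVT_gen g x1 x2 (Derive g)) as [c [Hc Hmvt]].
- intros t Ht. apply Derive_correct, Hg, Hbetween. lra.
- intros t Ht. apply continuity_pt_filterlim, (@ex_derive_continuous R_AbsRing R_NormedModule).
  apply Hg, Hbetween, Ht.
- rewrite E, Rminus_diag in Hmvt.
  destruct (Rmult_integral _ _ (eq_sym Hmvt)) as [Hz | Hz].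
  + now destruct (Hg c (Hbetween c Hc)).
  + lra.
Qed.

Lemma Derive_affine (c d y : R) : Derive (fun t => c * t + d) y = c.
Proof. apply is_derive_unique. auto_derive; auto; ring. Qed.

Lemma C1_Sigma_affine_coefs (a b : Rbar) (p0 p1 : R -> R) :
  C1_Sigma a b (fun x y => p1 x * y + p0 x) ->
  forall x, in_interval a b x -> ex_derive p0 x /\ ex_derive p1 x.
Proof.
intros HP x Hx.
assert (H0 : ex_derive p0 x).
{ eapply ex_derive_ext; [|apply (HP x 0 Hx)]. intros t; simpl; ring. }
split; [exact H0|].
eapply ex_derive_ext; [|apply (ex_derive_minus _ _ x (proj1 (HP x 1 Hx)) H0)].
intros t; unfold minus, plus, opp; simpl; ring.
Qed.

Lemma jac_affine (p0 p1 : R -> R) (Q : R -> R -> R) (x y : R) :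
  ex_derive p0 x -> ex_derive p1 x ->
  jac (fun x y => p1 x * y + p0 x) Q x y
  = (Derive p1 x * y + Derive p0 x) * pdy Q x y - p1 x * pdx Q x y.
Proof.
intros H0 H1. unfold jac, pdx at 1, pdy at 2. rewrite Derive_affine.
replace (Derive (fun t => p1 t * y + p0 t) x) with (Derive p1 x * y + Derive p0 x).
- ring.
- symmetry. apply is_derive_unique. auto_derive; auto. now rewrite !Rmult_1_l.
Qed.

Definition affine_level (p0 p1 : R -> R) (u t : R) : R := (u - p0 t) / p1 t.

Lemma is_derive_along_level_set (p0 p1 : R -> R) (Q : R -> R -> R) (u t : R) :
  let level := affine_level p0 p1 u in
  ex_derive p0 t -> ex_derive p1 t -> p1 t <> 0 ->
  differentiable_pt_lim Q t (level t) (pdx Q t (level t)) (pdy Q t (level t)) ->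
  is_derive (fun t => Q t (level t)) t
    (- jac (fun x y => p1 x * y + p0 x) Q t (level t) / p1 t).
Proof.
intros level H0 H1 Hp1 HQ.
set (dlevel := (- Derive p0 t * p1 t - (u - p0 t) * Derive p1 t) / p1 t ^ 2).
assert (Hlevel : is_derive level t dlevel).
{ unfold level, affine_level, dlevel. auto_derive; auto.
  change (fun x => p0 x) with p0; change (fun x => p1 x) with p1.
  field. exact Hp1. }
replace (- _ / p1 t) with (pdx Q t (level t) * 1 + pdy Q t (level t) * dlevel).
- apply is_derive_Reals, (derivable_pt_lim_comp_2d Q (fun t => t) level t); auto.
  + apply derivable_pt_lim_id.
  + now apply is_derive_Reals.
- rewrite jac_affine by auto. unfold dlevel, level, affine_level. field. exact Hp1.
Qed.

Lemma triangular_nonsingular_injective (a b : Rbar) (p0 q0 q1 : R -> R) :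
  let P := fun x _ : R => p0 x in
  let Q := fun x y : R => q1 x * y + q0 x in
  (forall x, in_interval a b x -> ex_derive p0 x) ->
  nonsingular a b P Q ->
  injective_Sigma a b P Q /\ (forall x, in_interval a b x -> q1 x <> 0).
Proof.
intros P Q Hp0 Hns.
assert (Hjac : forall x, in_interval a b x -> Derive p0 x * q1 x <> 0).
{ intros x Hx. replace (Derive p0 x * q1 x) with (jac P Q x 0); [now apply Hns|].
  unfold jac, pdx at 1, pdy, P, Q.
  now rewrite Derive_affine, Derive_const, Rmult_0_l, Rminus_0_r. }
split.
- intros x1 y1 x2 y2 H1 H2 EP EQ.
  assert (Ex : x1 = x2).
  { apply (injective_on_interval_of_Derive_neq0 a b p0); auto.
    intros x Hx. split; [now apply Hp0|].
    intros E. apply (Hjac x Hx). rewrite E. ring. }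
  subst x2. split; [reflexivity|].
  apply (Rmult_eq_reg_l (q1 x1)); [unfold Q in EQ; lra|].
  intros E. apply (Hjac x1 H1). rewrite E. ring.
- intros x Hx E. apply (Hjac x Hx). rewrite E. ring.
Qed.

Lemma affine_nonsingular_injective (a b : Rbar) (p0 p1 : R -> R) (Q : R -> R -> R) :
  let P := fun x y : R => p1 x * y + p0 x in
  (forall x, in_interval a b x -> ex_derive p0 x /\ ex_derive p1 x) ->
  C1_Sigma a b Q -> nonsingular a b P Q ->
  (forall x, in_interval a b x -> p1 x <> 0) ->
  injective_Sigma a b P Q.
Proof.
intros P Hp HQ Hns Hp1 x1 y1 x2 y2 H1 H2 EP EQ.
set (u := P x1 y1).
set (level := affine_level p0 p1 u).
assert (Hlevel : forall x y, in_interval a b x -> P x y = u -> y = level x).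
{ intros x y Hx E. unfold level, affine_level. rewrite <- E. unfold P. field. now apply Hp1. }
assert (Ex : x1 = x2).
{ apply (injective_on_interval_of_Derive_neq0 a b (fun t => Q t (level t))); auto.
  - intros x Hx. destruct (Hp x Hx) as [H0 H1'].
    assert (Hd := is_derive_along_level_set p0 p1 Q u x H0 H1' (Hp1 x Hx)
                    (C1_Sigma_differentiable a b Q x _ HQ Hx)).
    split; [eexists; exact Hd|].
    replace (Derive _ x) with (- jac P Q x (level x) / p1 x)
      by (symmetry; now apply is_derive_unique).
    intros E. apply (Hns x (level x) Hx).
    apply (Rmult_eq_reg_r (/ p1 x)); [|now apply Rinv_neq_0_compat, Hp1].
    unfold Rdiv in E. lra.
  - now rewrite <- (Hlevel x1 y1), <- (Hlevel x2 y2). }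
subst x2. split; [reflexivity|].
now rewrite (Hlevel x1 y1), (Hlevel x1 y2).
Qed.

Lemma affine_nonsingular_no_simple_zero (a b : Rbar) (p0 p1 : R -> R) (Q : R -> R -> R) :
  let P := fun x y : R => p1 x * y + p0 x in
  (forall x, in_interval a b x -> ex_derive p0 x /\ ex_derive p1 x) ->
  nonsingular a b P Q ->
  ~ (exists x0, in_interval a b x0 /\ p1 x0 = 0 /\ Derive p1 x0 <> 0).
Proof.
intros P Hp Hns [x0 [Hx0 [Hzero Hsimple]]].
destruct (Hp x0 Hx0) as [H0 H1].
apply (Hns x0 (- Derive p0 x0 / Derive p1 x0) Hx0).
unfold P. rewrite jac_affine, Hzero by auto. field. exact Hsimple.
Qed.

Theorem lemma3 (a b : Rbar) (Hab : Rbar_lt a b) :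
  (* (i) *)
  (forall p0 q0 q1 : R -> R,
     C1_I a b p0 -> C1_I a b q0 -> C1_I a b q1 ->
     let P := fun x y : R => p0 x in
     let Q := fun x y : R => q1 x * y + q0 x in
     C1_Sigma a b P -> C1_Sigma a b Q ->
     nonsingular a b P Q ->
     injective_Sigma a b P Q /\ (forall x, in_interval a b x -> q1 x <> 0)) /\
  (* (ii) *)
  (forall (p0 p1 : R -> R) (Q : R -> R -> R),
     let P := fun x y : R => p1 x * y + p0 x in
     C1_Sigma a b P -> C1_Sigma a b Q ->
     nonsingular a b P Q ->
     (forall x, in_interval a b x -> p1 x <> 0) ->
     injective_Sigma a b P Q) /\
  (* (iii) *)
  (forall (p0 p1 : R -> R) (Q : R -> R -> R),
     let P := fun x y : R => p1 x * y + p0 x in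
     C2_Sigma a b P -> C2_Sigma a b Q ->
     nonsingular a b P Q ->
     ~ (exists x0, in_interval a b x0 /\ p1 x0 = 0 /\ Derive p1 x0 <> 0)).
Proof.
split; [|split].
- intros p0 q0 q1 Hp0 _ _ P Q _ _ Hns.
  apply (triangular_nonsingular_injective a b p0 q0 q1); [|exact Hns].
  intros x Hx. now apply Hp0.
- intros p0 p1 Q P HP HQ Hns Hp1.
  apply (affine_nonsingular_injective a b p0 p1 Q); auto.
  now apply C1_Sigma_affine_coefs.
- intros p0 p1 Q P [HP _] _ Hns.
  apply (affine_nonsingular_no_simple_zero a b p0 p1 Q); [|exact Hns].
  now apply C1_Sigma_affine_coefs.
Qed.
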